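(* Consider the private information delivery (PID) problem with $K$ messages, $N$ servers and $M$ messages stored per server, where $1\le M\le K$. If $K/M$ is an integer and $N\ge K/M$, then the capacity is $C=M/K$.
   Context: The PID problem with parameters $(K,N,M)$: There are $K$ independent messages $W_1,\dots,W_K$, each consisting of $L$ i.i.d. uniform symbols from a finite field $\mathbb{F}_p$, so that (in $p$-ary units) $H(W_k)=L$ for all $k$ and $H(W_1,\dots,W_K)=\sum_k H(W_k)$. There are $N$ servers; server $n$ stores $S_n=\{W_k : k\in\mathcal{S}_n\}$ for some $\mathcal{S}_n\subset\{1,\dots,K\}$ with $|\mathcal{S}_n|=M$ (a design choice). The servers share a common random variable $Z$ independent of the messages. For each $k\in\{1,\dots,K\}$, server $n$ sends an answer $A_n^{[k]}$ that is a deterministic function of $(S_n,Z)$ and consists of $D_n$ symbols of $\mathbb{F}_p$ ($D_n$ independent of $k$). Correctness: $H(W_k\mid A_1^{[k]},\dots,A_N^{[k]})=0$ for all $k$. Privacy: for all $k$, $(A_1^{[1]},\dots,A_N^{[1]},W_1)$ and $(A_1^{[k]},\dots,A_N^{[k]},W_k)$ are identically distributed. The rate is $R=L/\sum_n D_n$; a rate is achievable if some scheme (choice of $L$, $p$, storage sets, $Z$, answer functions) satisfying these constraints has rate at least $R$; the capacity $C$ is the supremum of achievable rates over all storage designs and schemes. *)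

From HB Require Import structures.
From mathcomp Require Import all_boot all_order all_algebra.
From mathcomp Require Import all_classical all_reals.
From mathcomp Require Import exp Rstruct.
Set Implicit Arguments. Unset Strict Implicit. Unset Printing Implicit Defensive.
Import Order.TTheory GRing.Theory Num.Theory.
Local Open Scope ring_scope.

Notation Real := Rdefinitions.R.

Definition evprob (Om : finType) (P : Om -> Real) (E : pred Om) : Real :=
  \sum_(o in Om | E o) P o.

(* conditional entropy H(X | Y) = E[ - ln P(X | Y) ] (in nats; the unit is
   irrelevant for the statement H = 0). Zero-probability outcomes contribute 0. *)
Definition condH (Om : finType) (P : Om -> Real) (T1 T2 : eqType)
  (X : Om -> T1) (Y : Om -> T2) : Real :=
  \sum_(o : Om) P o *
     - ln (evprob P (fun o' => (X o' == X o) && (Y o' == Y o)) /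
           evprob P (fun o' => Y o' == Y o)).

Record pid_scheme (K N : nat) := PidScheme {
  fp : nat;
  fp_prime : prime fp;
  len : nat;                                  (* message length L *)
  ZT : finType;                               (* alphabet of common randomness Z *)
  PZ : ZT -> Real;
  dl : 'I_N -> nat;                           (* answer lengths D_n *)
  store : 'I_N -> {set 'I_K};
  (* answer A_n^{[k]} as a function of all messages and Z; see [pid_valid]
     for the requirement that it only depends on (S_n, Z) *)
  answer : 'I_K -> forall n : 'I_N,
             {ffun 'I_K -> 'rV['F_fp]_len} -> ZT -> (dl n).-tuple 'F_fp
}.

Arguments fp {K N}. Arguments len {K N}. Arguments ZT {K N}.
Arguments PZ {K N} p _. Arguments dl {K N} p _. Arguments store {K N} p _.
Arguments answer {K N} p _ _ _ _.

Section Scheme.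
Variables (K N M : nat) (s : pid_scheme K N).

Definition msgs := {ffun 'I_K -> 'rV['F_(fp s)]_(len s)}.

(* sample space: (W_1..W_K, Z), messages i.i.d. uniform and independent of Z *)
Definition Omega := (msgs * ZT s)%type.

Definition prob (o : Omega) : Real := PZ s o.2 / #|{: msgs}|%:R.

Definition Wk (k : 'I_K) (o : Omega) : 'rV['F_(fp s)]_(len s) := o.1 k.

Definition Ak (k : 'I_K) (o : Omega) : seq (seq 'F_(fp s)) :=
  [seq val (answer s k n o.1 o.2) | n <- enum 'I_N].

Definition pid_valid : Prop :=
  (forall z, 0 <= PZ s z) /\ (\sum_z PZ s z = 1) /\
  (forall n, #|store s n| = M) /\
  (forall k n (w w' : msgs) z, (forall i, i \in store s n -> w i = w' i) ->
      answer s k n w z = answer s k n w' z) /\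
  (forall k, condH prob (Wk k) (Ak k) = 0) /\
  (forall k k' a x,
      evprob prob (fun o => (Ak k o == a) && (Wk k o == x)) =
      evprob prob (fun o => (Ak k' o == a) && (Wk k' o == x))).

Definition rate : Real := (len s)%:R / (\sum_n dl s n)%:R.

End Scheme.

Definition achievable (K N M : nat) (r : Real) : Prop :=
  exists s : pid_scheme K N, pid_valid M s /\ r <= rate s.

Definition capacity (K N M : nat) : Real :=
  sup [set r : Real | achievable K N M r]%classic.

From HB Require Import structures.
From mathcomp Require Import all_boot all_order all_algebra.
From mathcomp Require Import all_classical all_reals.
From mathcomp Require Import exp Rstruct.
From mathcomp Require Import perm.
Set Implicit Arguments. Unset Strict Implicit. Unset Printing Implicit Defensive.
Import Order.TTheory GRing.Theory Num.Theory.
Local Open Scope ring_scope.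

(* Converse: with Z fixed at a value of positive probability and all messages
   but W_j fixed, correctness makes W_j an injective function of the answers of
   the servers storing j (the others do not see W_j), so
   L <= sum of D_n over the servers storing j; summing over j counts every D_n
   exactly M times, so K L <= M sum_n D_n.
   Achievability, with L = 1 over F_2: split the messages into K/M groups of M,
   server g < K/M stores group g and sends the bit z_g + [k in group g] W_k,
   where the key z is uniform among vectors summing to 0 over the first K/M
   servers; the other servers store group 0 and send nothing. The bits sum to
   W_k. Swapping W_k with W_k' and adding W_k' to the key at group(k) and
   group(k') is a measure-preserving bijection h with A^[k] o h = A^[k'] and
   W_k o h = W_k', which gives privacy. The rate is 1/(K/M) = M/K. *)

Section FiniteProbability.
Variables (Om : finType) (P : Om -> Rdefinitions.R) (T1 T2 : eqType).
Variables (X : Om -> T1) (Y : Om -> T2).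

Lemma condH_eq0_fun (f : T2 -> T1) : (forall o, X o = f (Y o)) -> condH P X Y = 0.
Proof.
move=> XE; rewrite /condH big1 // => o _.
have -> : evprob P (fun o' => (X o' == X o) && (Y o' == Y o)) =
          evprob P (fun o' => Y o' == Y o).
  apply: eq_bigl => o'; case: (Y o' =P Y o) => [YE|_]; last by rewrite andbF.
  by rewrite !XE YE !eqxx.
set q := evprob _ _; have [->|q_neq0] := eqVneq q 0.
  by rewrite invr0 mulr0 ln0 // oppr0 mulr0.
by rewrite divff // ln1 oppr0 mulr0.
Qed.

Lemma evprob_reindex (h : Om -> Om) (E : pred Om) :
  bijective h -> (forall o, P (h o) = P o) -> evprob P E = evprob P (fun o => E (h o)).
Proof.
move=> h_bij Ph; rewrite /evprob (reindex h); last exact: onW_bij.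
by apply: eq_big => [o|o _]; rewrite ?inE ?Ph.
Qed.

Hypothesis P_ge0 : forall o, 0 <= P o.

Lemma evprob_ge0 (E : pred Om) : 0 <= evprob P E.
Proof. exact: sumr_ge0. Qed.

Lemma evprobID (E F : pred Om) :
  evprob P E = evprob P (fun o => E o && F o) + evprob P (fun o => E o && ~~ F o).
Proof. exact: bigID. Qed.

Lemma condH_eq0_determined : condH P X Y = 0 ->
  forall o o', 0 < P o -> 0 < P o' -> Y o = Y o' -> X o = X o'.
Proof.
move=> condH0 o o' Po_gt0 Po'_gt0 YE.
pose joint o := evprob P (fun o' => (X o' == X o) && (Y o' == Y o)).
pose marg o := evprob P (fun o' => Y o' == Y o).
pose rest o := evprob P (fun o' => (Y o' == Y o) && (X o' != X o)).
have margE o1 : marg o1 = joint o1 + rest o1.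
  rewrite /marg (evprobID _ (fun o' => X o' == X o1)); congr (_ + _).
  by apply: eq_bigl => o2 /=; rewrite andbC.
have joint_gt0 : 0 < joint o.
  by rewrite /joint /evprob (bigD1 o) ?eqxx //= ltr_pwDl //; apply: sumr_ge0.
have term_ge0 o1 : 0 <= P o1 * - ln (joint o1 / marg o1).
  rewrite mulr_ge0 // oppr_ge0 ln_le0 //.
  have [->|marg_neq0] := eqVneq (marg o1) 0; first by rewrite invr0 mulr0.
  rewrite ler_pdivrMr ?mul1r ?margE ?lerDl ?evprob_ge0 //.
  by rewrite -margE lt_def marg_neq0 evprob_ge0.
have /eqP : P o * - ln (joint o / marg o) = 0.
  by apply: (psumr_eq0P (fun o1 _ => term_ge0 o1) condH0).
rewrite mulf_eq0 gt_eqF //= oppr_eq0 ln_eq0; last first.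
  by rewrite divr_gt0 // margE ltr_pwDl ?evprob_ge0.
move=> /eqP ratio1; apply/eqP/negPn/negP => XN.
have rest0 : rest o = 0.
  apply: (@addrI _ (joint o)); rewrite addr0 -margE -[LHS]mul1r -ratio1 divfK //.
  by rewrite margE gt_eqF // ltr_pwDl ?evprob_ge0.
move: (psumr_eq0P (fun o1 _ => P_ge0 o1) rest0) => /(_ o').
by rewrite inE -YE eqxx eq_sym XN => /(_ isT) /eqP; rewrite gt_eqF.
Qed.
End FiniteProbability.

Lemma leq_card_sized_seq (T U : finType) (d : nat) (f : T -> seq U) :
  injective f -> (forall x, size (f x) = d) -> (#|T| <= #|U| ^ d)%N.
Proof.
move=> f_inj f_size; rewrite -card_tuple.
pose F x : d.-tuple U := Tuple (introT eqP (f_size x)).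
by apply: (@leq_card _ _ F) => x y /(congr1 val) /f_inj.
Qed.

Lemma sum_ord_natr_eq (R : pzSemiRingType) n (P : pred nat) (g : nat) (a : R) :
  (g < n)%N -> P g -> \sum_(i < n | P i) (g == i)%:R * a = a.
Proof.
move=> g_lt_n Pg; rewrite (bigD1 (Ordinal g_lt_n)) //= eqxx mul1r big1 ?addr0 //.
move=> i /andP[_ i_neq]; rewrite (_ : (g == i) = false) ?mul0r //.
by apply: contraNF i_neq => /eqP gE; apply/eqP/val_inj.
Qed.

Lemma sum_ord_ltn n m : (m <= n)%N -> (\sum_(i < n) ((i < m)%N : nat))%N = m.
Proof.
move=> m_le_n; rewrite -(big_mkord xpredT (fun i => ((i < m)%N : nat))).
rewrite (big_cat_nat (leq0n m) m_le_n) /= (@eq_big_nat _ _ _ 0 m _ (fun=> 1%N)).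
  rewrite sum_nat_const_nat muln1 subn0 big1_seq ?addn0 // => i.
  by rewrite mem_index_iota /= => /andP[m_le_i _]; rewrite ltnNge m_le_i.
by move=> i /andP[_ ->].
Qed.

Lemma ltn_divn_ord d n (i : 'I_n) : (0 < d)%N -> (d %| n)%N -> (i %/ d < n %/ d)%N.
Proof. by move=> d_gt0 d_dvd_n; rewrite ltn_divLR // divnK. Qed.

Lemma card_divn_eq d n j : (0 < d)%N -> (d %| n)%N -> (j < n %/ d)%N ->
  #|[set i : 'I_n | (i %/ d)%N == j]| = d.
Proof.
move=> d_gt0 d_dvd_n j_lt.
have block_lt (r : 'I_d) : (j * d + r < n)%N.
  rewrite -(divnK d_dvd_n) (leq_trans (_ : _ < j.+1 * d)%N) ?leq_mul2r ?j_lt ?orbT //.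
  by rewrite mulSnr ltn_add2l.
pose f r := Ordinal (block_lt r).
have -> : [set i : 'I_n | (i %/ d)%N == j] = f @: [set: 'I_d].
  apply/setP => i; rewrite inE; apply/eqP/imsetP => [iE|[r _ ->]].
    exists (Ordinal (ltn_pmod i d_gt0)) => //.
    by apply: val_inj; rewrite /= -iE -divn_eq.
  by rewrite /= divnMDl // divn_small // addn0.
rewrite card_imset ?cardsT ?card_ord // => r r' /(congr1 val) /= /addnI.
exact: val_inj.
Qed.

Section Converse.
Variables (K N M : nat) (s : pid_scheme K N).
Hypothesis s_valid : pid_valid M s.

Lemma exists_PZ_gt0 : exists z, 0 < PZ s z.
Proof.
case: s_valid => PZ_ge0 [PZ_sum1 _].
have [|z /andP[_ PZz_gt0]] := @psumr_neq0P _ _ xpredT (PZ s) (fun z _ => PZ_ge0 z).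
  by rewrite PZ_sum1; apply/eqP; exact: oner_neq0.
by exists z.
Qed.

Lemma pid_decodable k (o o' : Omega s) : 0 < PZ s o.2 -> 0 < PZ s o'.2 ->
  Ak k o = Ak k o' -> Wk k o = Wk k o'.
Proof.
case: s_valid => PZ_ge0 [_ [_ [_ [correct _]]]] PZo_gt0 PZo'_gt0.
have prob_gt0 (o1 : Omega s) : 0 < PZ s o1.2 -> 0 < prob o1.
  by move=> PZo1_gt0; rewrite divr_gt0 // ltr0n; apply/card_gt0P; exists [ffun => 0].
apply: (condH_eq0_determined _ (correct k)); rewrite ?prob_gt0 //.
by move=> o1; rewrite divr_ge0.
Qed.

Lemma pid_len_le_storing j : (len s <= \sum_(n | j \in store s n) dl s n)%N.
Proof.
have [z0 PZz0_gt0] := exists_PZ_gt0.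
case: s_valid => _ [_ [_ [answer_local _]]].
pose w x : msgs s := [ffun i => if i == j then x else 0].
pose S := [seq n <- enum 'I_N | j \in store s n].
pose ans x := [seq val (answer s j n (w x) z0) | n <- S].
have shape_ans x : shape (ans x) = [seq dl s n | n <- S].
  by rewrite /shape -map_comp; apply: eq_map => n /=; rewrite size_tuple.
have ans_inj : injective (flatten \o ans).
  move=> x y /= ansE.
  have {}ansE : ans x = ans y.
    by rewrite -(flattenK (ans x)) -(flattenK (ans y)) ansE !shape_ans.
  have AkE : Ak j ((w x, z0) : Omega s) = Ak j (w y, z0).
    rewrite /Ak; apply/eq_in_map => n _ /=.
    case jn: (j \in store s n).
      by move/eq_in_map: ansE => /(_ n); rewrite mem_filter jn mem_enum; apply.
    congr val; apply: answer_local => i i_n; rewrite !ffunE.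
    by case: eqP i_n => // ->; rewrite jn.
  have := @pid_decodable j (w x, z0) (w y, z0) PZz0_gt0 PZz0_gt0 AkE.
  by rewrite /Wk /= !ffunE eqxx.
have size_ans x : size ((flatten \o ans) x) = \sum_(n | j \in store s n) dl s n.
  by rewrite /= size_flatten shape_ans sumnE big_map big_filter big_enum_cond.
have := leq_card_sized_seq ans_inj size_ans.
by rewrite card_mx card_Fp ?fp_prime // mul1n leq_exp2l // prime_gt1 // fp_prime.
Qed.

Lemma pid_len_le : (K * len s <= M * \sum_n dl s n)%N.
Proof.
case: s_valid => _ [_ [card_store _]].
have double_count :
    (\sum_(j < K) \sum_(n | j \in store s n) dl s n = M * \sum_n dl s n)%N.
  rewrite (eq_bigr (fun j => \sum_n if j \in store s n then dl s n else 0)%N);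
    last by move=> j _; rewrite big_mkcond.
  rewrite exchange_big big_distrr; apply: eq_bigr => n _ /=.
  by rewrite -big_mkcond sum_nat_const card_store mulnC.
rewrite -double_count -[K in (K * _)%N]card_ord -sum_nat_const.
by apply: leq_sum => j _; apply: pid_len_le_storing.
Qed.

Lemma pid_rate_le : (0 < K)%N -> rate s <= M%:R / K%:R.
Proof.
move=> K_gt0; have := pid_len_le; rewrite /rate.
have [->|D_gt0] := posnP (\sum_n dl s n).
  by rewrite muln0 leqn0 muln_eq0 gtn_eqF //= => /eqP ->; rewrite mul0r divr_ge0.
rewrite ler_pdivrMr ?ltr0n // mulrAC ler_pdivlMr ?ltr0n // -!natrM ler_nat.
by rewrite mulnC.
Qed.
End Converse.

Section GroupScheme.
Variables (K N M : nat).
Local Notation m := (K %/ M)%N.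

Definition zero_sum_key (z : {ffun 'I_N -> 'F_2}) : bool :=
  \sum_(n < N | (n < m)%N) z n == 0.

Definition key := {z : {ffun 'I_N -> 'F_2} | zero_sum_key z}.

Definition group_store (n : 'I_N) : {set 'I_K} :=
  [set k : 'I_K | (k %/ M)%N == if (n < m)%N then nat_of_ord n else 0%N].

Definition group_answer (k : 'I_K) (n : 'I_N) (w : {ffun 'I_K -> 'rV['F_2]_1})
    (z : key) : ((n < m)%N : nat).-tuple 'F_2 :=
  nseq_tuple _ (val z n + ((k %/ M)%N == n)%:R * w k 0 0).

Definition group_scheme : pid_scheme K N :=
  @PidScheme K N 2 isT 1 key (fun=> #|{: key}|%:R^-1) (fun n => (n < m)%N : nat)
    group_store group_answer.

Definition key_shift (g g' : nat) (a : 'F_2) (z : key) : key :=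
  insubd z [ffun n => val z n + (g == n)%:R * a - (g' == n)%:R * a].

Definition swap_shift (k k' : 'I_K) (o : Omega group_scheme) : Omega group_scheme :=
  ([ffun i => o.1 (tperm k k' i)], key_shift (k' %/ M) (k %/ M) (o.1 k' 0 0) o.2).

Hypotheses (M_gt0 : (0 < M)%N) (M_le_K : (M <= K)%N) (M_dvd_K : (M %| K)%N).
Hypothesis m_le_N : (m <= N)%N.

Let group_lt (k : 'I_K) : (k %/ M < m)%N := ltn_divn_ord k M_gt0 M_dvd_K.

Lemma key_sum (z : key) : \sum_(n < N | (n < m)%N) val z n = 0.
Proof. exact/eqP/(valP z). Qed.

Lemma sum_key_indicator (g : nat) (a : 'F_2) : (g < m)%N ->
  \sum_(n < N | (n < m)%N) (g == n)%:R * a = a.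
Proof.
move=> g_lt; apply: (sum_ord_natr_eq (P := fun i => (i < m)%N)) => //.
exact: leq_trans g_lt m_le_N.
Qed.

Lemma key_shiftE g g' a z : (g < m)%N -> (g' < m)%N ->
  val (key_shift g g' a z) = [ffun n => val z n + (g == n)%:R * a - (g' == n)%:R * a].
Proof.
move=> g_lt g'_lt; rewrite insubdK // unfold_in /zero_sum_key.
under eq_bigr do rewrite ffunE.
by rewrite !big_split /= sumrN key_sum !sum_key_indicator // add0r subrr.
Qed.

Lemma key_shiftK g g' a : (g < m)%N -> (g' < m)%N ->
  cancel (key_shift g g' a) (key_shift g' g a).
Proof.
move=> g_lt g'_lt z; apply: val_inj; rewrite !key_shiftE //.
by apply/ffunP => n; rewrite !ffunE subrK addrK.
Qed.

Lemma swap_shiftK k k' : cancel (swap_shift k k') (swap_shift k' k).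
Proof.
move=> [w z]; rewrite /swap_shift /= ffunE tpermL key_shiftK //; congr pair.
by apply/ffunP => i; rewrite !ffunE tpermC tpermK.
Qed.

Lemma Ak_swap_shift k k' o : Ak k (swap_shift k k' o) = Ak k' o.
Proof.
rewrite /Ak; apply/eq_in_map => n _ /=; rewrite /group_answer key_shiftE //.
by rewrite !ffunE tpermL subrK.
Qed.

Lemma Wk_swap_shift k k' o : Wk k (swap_shift k k' o) = Wk k' o.
Proof. by rewrite /Wk ffunE tpermL. Qed.

Lemma group_scheme_decodable k : condH (prob (s:=group_scheme)) (Wk k) (Ak k) = 0.
Proof.
apply: (@condH_eq0_fun _ _ _ _ _ _ (fun a => const_mx (\sum_(t <- a) head 0 t))).
move=> [w z]; apply/matrixP => i j; rewrite !ord1 mxE /Ak big_map big_enum /=.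
have headE (n : 'I_N) : head 0 (val (group_answer k n w z)) =
    if (n < m)%N then val z n + ((k %/ M)%N == n)%:R * w k 0 0 else 0.
  by rewrite /group_answer; case: (n < m)%N.
under eq_bigr do rewrite headE.
by rewrite -big_mkcond big_split /= key_sum sum_key_indicator // add0r.
Qed.

Lemma group_scheme_valid : pid_valid M group_scheme.
Proof.
have zero_key : zero_sum_key [ffun=> 0].
  by rewrite /zero_sum_key big1 // => n _; rewrite ffunE.
have key_card_gt0 : (0 < #|{: key}|)%N by apply/card_gt0P; exists (Sub _ zero_key).
split; first by move=> z; rewrite invr_ge0.
split; first by rewrite sumr_const -[X in X = 1]mulr_natr mulVf // pnatr_eq0 -lt0n.
split.
  move=> n; rewrite /= /group_store card_divn_eq //.
  by case: ifP => // _; rewrite divn_gt0.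
split.
  move=> k n w w' z ww'; rewrite /= /group_answer.
  have [kn|] := eqVneq (k %/ M)%N n; last by rewrite !mul0r.
  by rewrite ww' // inE -kn group_lt eqxx.
split; first exact: group_scheme_decodable.
move=> k k' a x.
(* The key is uniform, so [prob] is constant and trivially preserved. *)
rewrite [RHS](@evprob_reindex _ _ (swap_shift k' k)) //; last first.
  exact: Bijective (swap_shiftK k' k) (swap_shiftK k k').
by apply: eq_bigl => o; rewrite Ak_swap_shift Wk_swap_shift.
Qed.

Lemma group_scheme_rate : rate group_scheme = M%:R / K%:R.
Proof.
rewrite /rate /= sum_ord_ltn // div1r -[in K%:R](divnK M_dvd_K) natrM invfM.
by rewrite mulrCA mulfV ?mulr1 // pnatr_eq0 -lt0n.
Qed.

End GroupScheme.

Lemma sup_eq_max (R : realType) (E : set R) (x : R) : E x -> ubound E x -> sup E = x.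
Proof.
move=> Ex x_ub; apply/eqP; rewrite eq_le ge_sup //=; last by exists x.
by apply: ub_le_sup => //; exists x.
Qed.

Theorem corollary1 (K N M : nat) :
  (1 <= M)%N -> (M <= K)%N -> (M %| K)%N -> (K %/ M <= N)%N ->
  capacity K N M = (M%:R / K%:R : Rdefinitions.R).
Proof.
move=> M_gt0 M_le_K M_dvd_K m_le_N.
apply: sup_eq_max => [|r [s [s_valid r_le]]].
  exists (group_scheme K N M); rewrite group_scheme_rate //.
  by split=> //; apply: group_scheme_valid.
by rewrite (le_trans r_le) // pid_rate_le // (leq_trans M_gt0).
Qed.
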